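(* Let $\mathcal{E}=\{\eta_{i},\rho_{i}\}_{i\in\mathbb{N}_{n}}$ be an ensemble and let $H\in\mathbb{H}(\mathcal{E})$ satisfy $\Tr H=q_{\sf G}(\mathcal{E})$. Then $\Pi(\mathcal{E})H\Pi(\mathcal{E})=H$, where $\Pi(\mathcal{E})$ is the orthogonal projection onto the support of $\rho_0=\sum_i\eta_i\rho_i$.
   Context: $\mathbb{N}_{n}=\{1,\ldots,n\}$. $\mathcal{H}$ is a finite-dimensional complex Hilbert space, $\mathbb{H}$ the Hermitian operators on it, $\mathbb{H}_{+}$ the positive-semidefinite ones. An ensemble: density operators $\rho_i$ with probabilities $\eta_i>0$ summing to $1$. A measurement is $\{M_{?}\}\cup\{M_{i}\}_{i\in\mathbb{N}_{n}}\subseteq\mathbb{H}_+$ summing to the identity. $\mathcal{C}_{i}(\mathcal{E})$ is the maximum of $\eta_{i}\Tr(\rho_{i}M_{i})/\Tr(\rho_{0}M_{i})$ over measurements with $\Tr(\rho_{0}M_{i})>0$. $\mathbb{M}_{i}(\mathcal{E})=\{E\in\mathbb{H}_{+}\mid\Tr[(\mathcal{C}_{i}(\mathcal{E})\rho_{0}-\eta_{i}\rho_{i})E]=0\}$, $\mathbb{M}_{i}^{*}(\mathcal{E})=\{E\in\mathbb{H}\mid\Tr(EF)\ge0\ \forall F\in\mathbb{M}_{i}(\mathcal{E})\}$, $\mathbb{H}(\mathcal{E})=\{H\in\mathbb{H}_{+}\mid H-\eta_{i}\rho_{i}\in\mathbb{M}_{i}^{*}(\mathcal{E})\ \forall i\in\mathbb{N}_n\}$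 and $q_{\sf G}(\mathcal{E})=\min_{H\in\mathbb{H}(\mathcal{E})}\Tr H$. *)

(* Complex scalars: an arbitrary numClosedFieldType C
   (e.g. algC or complex R); the Hilbert space is C^d (row vectors). *)
From HB Require Import structures.
From mathcomp Require Import all_boot all_order all_algebra.
From mathcomp Require Import sesquilinear spectral.
Set Implicit Arguments. Unset Strict Implicit. Unset Printing Implicit Defensive.
Import Order.TTheory GRing.Theory Num.Theory.
Local Open Scope ring_scope.
Local Open Scope sesquilinear_scope.

Section QDefs.
Variable C : numClosedFieldType.

Definition hermitian d (A : 'M[C]_d) : Prop := A ^t* = A.

Definition psd d (A : 'M[C]_d) : Prop :=
  hermitian A /\ forall v : 'rV[C]_d, 0 <= (v *m A *m v ^t*) 0 0.

Definition density d (rho : 'M[C]_d) : Prop := psd rho /\ \tr rho = 1.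

Definition is_ensemble n d (eta : 'I_n -> C) (rho : 'I_n -> 'M[C]_d) : Prop :=
  (forall i, 0 < eta i) /\ \sum_(i < n) eta i = 1 /\ (forall i, density (rho i)).

Definition rho0 n d (eta : 'I_n -> C) (rho : 'I_n -> 'M[C]_d) : 'M[C]_d :=
  \sum_(i < n) eta i *: rho i.

Definition measurement n d (Mq : 'M[C]_d) (M : 'I_n -> 'M[C]_d) : Prop :=
  psd Mq /\ (forall i, psd (M i)) /\ Mq + \sum_(i < n) M i = 1%:M.

Definition Cvalues n d (eta : 'I_n -> C) (rho : 'I_n -> 'M[C]_d) (i : 'I_n)
  (r : C) : Prop :=
  exists (Mq : 'M[C]_d) (M : 'I_n -> 'M[C]_d), measurement Mq M /\
    0 < \tr (rho0 eta rho *m M i) /\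
    r = eta i * \tr (rho i *m M i) / \tr (rho0 eta rho *m M i).

Definition is_Ci n d (eta : 'I_n -> C) (rho : 'I_n -> 'M[C]_d) (i : 'I_n)
  (c : C) : Prop :=
  Cvalues eta rho i c /\ forall r, Cvalues eta rho i r -> r <= c.

Definition Mset n d (eta : 'I_n -> C) (rho : 'I_n -> 'M[C]_d) (c : C) (i : 'I_n)
  (E : 'M[C]_d) : Prop :=
  psd E /\ \tr ((c *: rho0 eta rho - eta i *: rho i) *m E) = 0.

Definition Mdual n d (eta : 'I_n -> C) (rho : 'I_n -> 'M[C]_d) (c : C) (i : 'I_n)
  (E : 'M[C]_d) : Prop :=
  hermitian E /\ forall F, Mset eta rho c i F -> 0 <= \tr (E *m F).

Definition Hset n d (eta : 'I_n -> C) (rho : 'I_n -> 'M[C]_d) (cs : 'I_n -> C)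
  (H : 'M[C]_d) : Prop :=
  psd H /\ forall i, Mdual eta rho (cs i) i (H - eta i *: rho i).

Definition is_qG n d (eta : 'I_n -> C) (rho : 'I_n -> 'M[C]_d) (cs : 'I_n -> C)
  (q : C) : Prop :=
  (exists H, Hset eta rho cs H /\ \tr H = q) /\
  forall H, Hset eta rho cs H -> q <= \tr H.

(* P is the orthogonal projection onto the support (range) of the Hermitian A.
   Operators act on row vectors (v |-> v *m A), so the range is the row space. *)
Definition is_support_proj d (P A : 'M[C]_d) : Prop :=
  hermitian P /\ P *m P = P /\ (P == A)%MS.

End QDefs.

(* Since rho_0 is a positive combination of the rho_i, every rho_i is supported in
   the support of rho_0, so compression X |-> Pi X Pi fixes each rho_i.  It then
   maps each M_i(E) into itself, hence (by Tr((Pi E Pi) F) = Tr(E (Pi F Pi))) each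
   dual cone M_i^*(E) and H(E) into themselves.  So Pi H Pi is feasible, and with
   Q = 1 - Pi, Tr(Pi H Pi) = Tr H - Tr(Q H Q); minimality of Tr H forces
   Tr(Q H Q) = 0, hence Q H = 0 because H is positive semidefinite. *)

From Pilot Require Import Defs.
From HB Require Import structures.
From mathcomp Require Import all_boot all_order all_algebra.
From mathcomp Require Import sesquilinear spectral ring.
Import Order.TTheory GRing.Theory Num.Theory Num.Def.
Set Implicit Arguments. Unset Strict Implicit. Unset Printing Implicit Defensive.
Local Open Scope ring_scope.
Local Open Scope sesquilinear_scope.

Section PositiveSemidefinite.
Variable C : numClosedFieldType.

Lemma trmxC_mul m n p (A : 'M[C]_(m, n)) (B : 'M[C]_(n, p)) :
  (A *m B)^t* = B^t* *m A^t*.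
Proof. by rewrite trmx_mul map_mxM. Qed.

Lemma hermitian_formC d (A : 'M[C]_d) (u v : 'rV[C]_d) : Defs.hermitian A ->
  ((u *m A *m v^t*) 0 0)^* = (v *m A *m u^t*) 0 0.
Proof.
move=> hA; have -> : ((u *m A *m v^t*) 0 0)^* = (u *m A *m v^t*)^t* 0 0.
  by rewrite !mxE.
by rewrite !trmxC_mul trmxCK hA mulmxA.
Qed.

Lemma hermitian_mulC d (A B : 'M[C]_d) : Defs.hermitian A -> Defs.hermitian B ->
  A *m B = 0 -> B *m A = 0.
Proof.
move=> hA hB AB0; rewrite -hA -hB -trmxC_mul AB0.
by apply/matrixP => i j; rewrite !mxE conjC0.
Qed.

Lemma hermitian_compl d (P : 'M[C]_d) :
  Defs.hermitian P -> Defs.hermitian (1%:M - P).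
Proof.
rewrite /Defs.hermitian linearB map_mxB /= => ->; congr (_ - _).
by apply/matrixP => i j; rewrite !mxE conjC_nat eq_sym.
Qed.

Lemma psd_form_eq0 d (A : 'M[C]_d) (v : 'rV[C]_d) :
  psd A -> (v *m A *m v^t*) 0 0 = 0 -> v *m A = 0.
Proof.
move=> [hA psdA] vAv0; set w := v *m A.
pose a := (w *m A *m w^t*) 0 0; pose b := (v *m A *m w^t*) 0 0.
have a_ge0 : 0 <= a := psdA w.
have b_dot : b = dotmx w w by rewrite dotmxE.
have b_ge0 : 0 <= b by rewrite b_dot dnorm_ge0.
(* [u := (a + 1) v - b w] has form [-(a + 2) b^2], which is negative unless [b = 0]. *)
pose u := (a + 1) *: v - b *: w.
have : 0 <= form conjC A u u := psdA u.
rewrite formDl !formDr !formNl !formNr !formZl !formZr.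
have wAv : form conjC A w v = b by rewrite -[b]geC0_conj // hermitian_formC.
have a1_ge0 : 0 <= a + 1 by rewrite addr_ge0.
rewrite wAv /form vAv0 -/a -/b /= (geC0_conj a1_ge0) (geC0_conj b_ge0).
rewrite [X in 0 <= X](_ : _ = - ((a + 2) * b ^+ 2)); last by ring.
rewrite oppr_ge0 pmulr_rle0 ?ltr_wpDl // => b2_le0.
have : b ^+ 2 = 0 by apply/le_anti; rewrite b2_le0 exprn_ge0.
by move/eqP; rewrite sqrf_eq0 b_dot dnorm_eq0 => /eqP.
Qed.

Lemma psd_congr m d (A : 'M[C]_d) (X : 'M[C]_(m, d)) :
  psd A -> psd (X *m A *m X^t*).
Proof.
move=> [hA psdA]; split.
  by rewrite /Defs.hermitian !trmxC_mul trmxCK hA mulmxA.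
move=> v; have -> : v *m (X *m A *m X^t*) *m v^t* = v *m X *m A *m (v *m X)^t*.
  by rewrite trmxC_mul !mulmxA.
exact: psdA.
Qed.

Lemma psd_trace_ge0 d (A : 'M[C]_d) : psd A -> 0 <= \tr A.
Proof.
by move=> [_ psdA]; apply: sumr_ge0 => k _; rewrite -(formee conjC); apply: psdA.
Qed.

Lemma psd_trace_eq0 d (A : 'M[C]_d) : psd A -> \tr A = 0 -> A = 0.
Proof.
move=> psdA tr0; apply/row_matrixP => k; rewrite row0 rowE.
apply: psd_form_eq0 => //; rewrite -[_ 0 0]/(form conjC A _ _) formee.
by apply: (psumr_eq0P _ tr0) => // j _; rewrite -(formee conjC); apply: psdA.2.
Qed.

Lemma psd_congr_eq0 m d (A : 'M[C]_d) (X : 'M[C]_(m, d)) :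
  psd A -> X *m A *m X^t* = 0 -> X *m A = 0.
Proof.
move=> psdA XAX0; apply/row_matrixP => k; rewrite row0 row_mul rowE.
apply: psd_form_eq0 => //; set e := delta_mx 0 k.
have -> : e *m X *m A *m (e *m X)^t* = e *m (X *m A *m X^t*) *m e^t*.
  by rewrite trmxC_mul !mulmxA.
by rewrite XAX0 mulmx0 mul0mx mxE.
Qed.

End PositiveSemidefinite.

Lemma mxtrace_compress (R : comPzRingType) d (P A B : 'M[R]_d) :
  \tr (A *m (P *m B *m P)) = \tr (P *m A *m P *m B).
Proof. by rewrite !mulmxA mxtrace_mulC !mulmxA. Qed.

Lemma mxtrace_compressD (R : comPzRingType) d (P A : 'M[R]_d) : P *m P = P ->
  \tr (P *m A *m P) + \tr ((1%:M - P) *m A *m (1%:M - P)) = \tr A.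
Proof.
move=> PP; rewrite mxtrace_mulC mulmxA (mxtrace_mulC _ (1%:M - P)) mulmxA.
have QQ : (1%:M - P) *m (1%:M - P) = 1%:M - P.
  by rewrite mulmxBl mul1mx mulmxBr mulmx1 PP subrr subr0.
by rewrite PP QQ -linearD /= -mulmxDl addrC subrK mul1mx.
Qed.

Lemma mulmx_proj_submx (F : fieldType) m d (A : 'M[F]_(m, d)) (P : 'M[F]_d) :
  (A <= P)%MS -> P *m P = P -> A *m P = A.
Proof. by move=> /submxP [D ->] PP; rewrite -mulmxA PP. Qed.

Lemma compress_id (R : pzRingType) d (P A : 'M[R]_d) :
  (1%:M - P) *m A = 0 -> A *m (1%:M - P) = 0 -> P *m A *m P = A.
Proof.
rewrite mulmxBl mulmxBr mul1mx mulmx1 => /eqP; rewrite subr_eq0 => /eqP <-.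
by move=> /eqP; rewrite subr_eq0 => /eqP <-.
Qed.

Section Compression.
Variables (C : numClosedFieldType) (n d : nat).
Variables (eta : 'I_n -> C) (rho : 'I_n -> 'M[C]_d) (P : 'M[C]_d).
Hypothesis hermP : Defs.hermitian P.
Hypothesis rhoP : forall j, P *m rho j *m P = rho j.

Lemma rho0_compress : P *m rho0 eta rho *m P = rho0 eta rho.
Proof.
rewrite /rho0 mulmx_sumr mulmx_suml; apply: eq_bigr => j _.
by rewrite -scalemxAr -scalemxAl rhoP.
Qed.

Lemma Mset_compress c i F : Mset eta rho c i F -> Mset eta rho c i (P *m F *m P).
Proof.
move=> [psdF trF]; split; first by rewrite -{2}hermP; apply: psd_congr.
rewrite mxtrace_compress mulmxBr mulmxBl -!scalemxAr -!scalemxAl.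
by rewrite rho0_compress rhoP.
Qed.

Lemma Mdual_compress c i E : Mdual eta rho c i E -> Mdual eta rho c i (P *m E *m P).
Proof.
move=> [hE dualE]; split; first by rewrite /Defs.hermitian !trmxC_mul hE hermP mulmxA.
by move=> F /Mset_compress MF; rewrite -mxtrace_compress; apply: dualE.
Qed.

Lemma Hset_compress cs H : Hset eta rho cs H -> Hset eta rho cs (P *m H *m P).
Proof.
move=> [psdH dualH]; split; first by rewrite -{2}hermP; apply: psd_congr.
move=> i; have /Mdual_compress := dualH i.
by rewrite mulmxBr mulmxBl -scalemxAr -scalemxAl rhoP.
Qed.

End Compression.

Lemma ensemble_kernel (C : numClosedFieldType) n d m
    (eta : 'I_n -> C) (rho : 'I_n -> 'M[C]_d) (X : 'M[C]_(m, d)) :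
  is_ensemble eta rho -> X *m rho0 eta rho *m X^t* = 0 -> forall i, X *m rho i = 0.
Proof.
move=> [eta_gt0 [_ dens]] X0 i; have psd_rho j : psd (rho j) := (dens j).1.
have tr_sum :
    \tr (X *m rho0 eta rho *m X^t*) = \sum_j eta j * \tr (X *m rho j *m X^t*).
  rewrite /rho0 mulmx_sumr mulmx_suml raddf_sum /=; apply: eq_bigr => j _.
  by rewrite -scalemxAr -scalemxAl mxtraceZ.
rewrite X0 mxtrace0 in tr_sum.
have summand_ge0 j : true -> 0 <= eta j * \tr (X *m rho j *m X^t*).
  move=> _; apply: mulr_ge0; first exact: ltW.
  exact: psd_trace_ge0 (psd_congr X (psd_rho j)).
have /eqP := psumr_eq0P summand_ge0 (esym tr_sum) (i := i) isT.
rewrite mulf_eq0 gt_eqF //= => /eqP tr0.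
exact: psd_congr_eq0 (psd_rho i) (psd_trace_eq0 (psd_congr X (psd_rho i)) tr0).
Qed.

Theorem lemma3 (C : numClosedFieldType) (n d : nat)
  (eta : 'I_n -> C) (rho : 'I_n -> 'M[C]_d)
  (cs : 'I_n -> C) (q : C) (H Pi : 'M[C]_d) :
  is_ensemble eta rho ->
  (forall i, is_Ci eta rho i (cs i)) ->
  is_qG eta rho cs q ->
  Hset eta rho cs H ->
  \tr H = q ->
  is_support_proj Pi (rho0 eta rho) ->
  Pi *m H *m Pi = H.
Proof.
(* Only the minimality of Tr H over H(E) matters: cs need not be the C_i(E). *)
move=> ens _ [_ qmin] HsetH trH [hPi [PiPi /andP [_ rho0_sub]]].
have [psdH _] := HsetH; set Q := 1%:M - Pi.
have hQ : Defs.hermitian Q := hermitian_compl hPi.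
have psdQHQ : psd (Q *m H *m Q) by rewrite -{2}hQ; apply: psd_congr.
have Qrho i : Q *m rho i = 0.
  apply: (ensemble_kernel ens); rewrite hQ -mulmxA [rho0 eta rho *m Q]mulmxBr.
  by rewrite mulmx1 (mulmx_proj_submx rho0_sub PiPi) subrr mulmx0.
have rhoPi j : Pi *m rho j *m Pi = rho j.
  have [[hrho _] _] := ens.2.2 j.
  by apply: compress_id (Qrho j) (hermitian_mulC hQ hrho (Qrho j)).
have trQHQ_le0 : \tr (Q *m H *m Q) <= 0.
  have := qmin _ (Hset_compress hPi rhoPi HsetH).
  by rewrite -trH -(mxtrace_compressD H PiPi) gerDl; apply.
have QH : Q *m H = 0.
  apply: psd_congr_eq0 psdH _; rewrite hQ; apply: (psd_trace_eq0 psdQHQ).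
  by apply/le_anti; rewrite trQHQ_le0 (psd_trace_ge0 psdQHQ).
exact: compress_id QH (hermitian_mulC hQ psdH.1 QH).
Qed.
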